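(* Let $M\ge2$ and define the $M\times M$ matrix $g_{x_1,x_2}=1$ if $x_1\ge x_2$ and $g_{x_1,x_2}=-1$ otherwise. Then the largest singular value of $g$ is $\csc(\pi/(2M))$, it is twofold degenerate, and the quantum value of $g$ equals $M\csc(\pi/(2M))$ (attained).
   Context: The quantum value is the supremum of $\sum_{x_1,x_2}g_{x_1,x_2}\operatorname{tr}(\rho\,\mathcal A_1(x_1)\otimes\mathcal A_2(x_2))$ over finite-dimensional complex Hilbert spaces $\mathcal H_1,\mathcal H_2$, density operators $\rho$ on $\mathcal H_1\otimes\mathcal H_2$ and Hermitian operators $\mathcal A_i(x_i)$ on $\mathcal H_i$ with eigenvalues in $[-1,1]$. *)

From Stdlib Require Import Reals Lra Lia.
Open Scope R_scope.

Fixpoint rsum (n : nat) (f : nat -> R) : R :=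
  match n with O => 0 | S m => rsum m f + f m end.

Record C : Type := mkC { Re : R ; Im : R }.
Definition RtoC (x : R) : C := mkC x 0.
Definition C0 : C := RtoC 0.
Definition Cadd (z w : C) : C := mkC (Re z + Re w) (Im z + Im w).
Definition Cmul (z w : C) : C :=
  mkC (Re z * Re w - Im z * Im w) (Re z * Im w + Im z * Re w).
Definition Cconj (z : C) : C := mkC (Re z) (- Im z).

Fixpoint csum (n : nat) (f : nat -> C) : C :=
  match n with O => C0 | S m => Cadd (csum m f) (f m) end.

(** * Matrices / operators on C^d, entries indexed by 0..d-1 *)
Definition CMat := nat -> nat -> C.
Definition CVec := nat -> C.

Definition mmul (d : nat) (A B : CMat) : CMat :=
  fun i j => csum d (fun k => Cmul (A i k) (B k j)).
Definition mapply (d : nat) (A : CMat) (v : CVec) : CVec :=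
  fun i => csum d (fun k => Cmul (A i k) (v k)).
Definition trace (d : nat) (A : CMat) : C := csum d (fun i => A i i).
Definition inner (d : nat) (v w : CVec) : C :=
  csum d (fun i => Cmul (Cconj (v i)) (w i)).

Definition hermitian (d : nat) (A : CMat) : Prop :=
  forall i j, (i < d)%nat -> (j < d)%nat -> A i j = Cconj (A j i).

Definition eigenvalue (d : nat) (A : CMat) (lam : C) : Prop :=
  exists v : CVec, (exists i, (i < d)%nat /\ v i <> C0) /\
    forall i, (i < d)%nat -> mapply d A v i = Cmul lam (v i).

Definition observable (d : nat) (A : CMat) : Prop :=
  hermitian d A /\
  forall lam, eigenvalue d A lam -> Im lam = 0 /\ -1 <= Re lam <= 1.

Definition psd (d : nat) (rho : CMat) : Prop :=
  hermitian d rho /\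
  forall v : CVec, Im (inner d v (mapply d rho v)) = 0 /\
                   0 <= Re (inner d v (mapply d rho v)).

Definition density (d : nat) (rho : CMat) : Prop :=
  psd d rho /\ trace d rho = RtoC 1.

(** Kronecker product A (x) B of A on C^d1 and B on C^d2, acting on
    C^(d1*d2) = C^d1 (x) C^d2 with basis e_a (x) e_b  |->  index a*d2 + b *)
Definition kron (d2 : nat) (A B : CMat) : CMat :=
  fun i j => Cmul (A (Nat.div i d2) (Nat.div j d2))
                  (B (Nat.modulo i d2) (Nat.modulo j d2)).

Definition achievable (M : nat) (g : nat -> nat -> R) (r : R) : Prop :=
  exists (d1 d2 : nat) (rho : CMat) (A1 A2 : nat -> CMat),
    (1 <= d1)%nat /\ (1 <= d2)%nat /\
    density (d1 * d2) rho /\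
    (forall x1, (x1 < M)%nat -> observable d1 (A1 x1)) /\
    (forall x2, (x2 < M)%nat -> observable d2 (A2 x2)) /\
    csum M (fun x1 => csum M (fun x2 =>
       Cmul (RtoC (g x1 x2))
            (trace (d1 * d2) (mmul (d1 * d2) rho (kron d2 (A1 x1) (A2 x2))))))
    = RtoC r.

Definition quantum_value (M : nat) (g : nat -> nat -> R) (q : R) : Prop :=
  is_lub (achievable M g) q.

Definition gtg (M : nat) (g : nat -> nat -> R) (i j : nat) : R :=
  rsum M (fun k => g k i * g k j).

Definition gtg_eigvec (M : nat) (g : nat -> nat -> R) (lam : R) (v : nat -> R) : Prop :=
  forall i, (i < M)%nat -> rsum M (fun k => gtg M g i k * v k) = lam * v i.

Definition singular_value (M : nat) (g : nat -> nat -> R) (sigma : R) : Prop :=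
  0 <= sigma /\
  exists v : nat -> R, (exists i, (i < M)%nat /\ v i <> 0) /\
                       gtg_eigvec M g (sigma * sigma) v.

Definition subspace_dim (M : nat) (S : (nat -> R) -> Prop) (k : nat) : Prop :=
  exists u : nat -> nat -> R,
    (forall j, (j < k)%nat -> S (u j)) /\
    (forall c : nat -> R,
        (forall i, (i < M)%nat -> rsum k (fun j => c j * u j i) = 0) ->
        forall j, (j < k)%nat -> c j = 0) /\
    (forall v, S v -> exists c : nat -> R,
        forall i, (i < M)%nat -> v i = rsum k (fun j => c j * u j i)).

(** multiplicity (degeneracy) of the singular value sigma of g: the dimension
    of the corresponding right singular subspace, i.e. of the eigenspace of
    g^T g for the eigenvalue sigma^2 *)
Definition singular_multiplicity (M : nat) (g : nat -> nat -> R) (sigma : R) (k : nat) : Prop :=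
  subspace_dim M (gtg_eigvec M g (sigma * sigma)) k.

Definition largest_singular_value (M : nat) (g : nat -> nat -> R) (sigma : R) : Prop :=
  singular_value M g sigma /\ forall s, singular_value M g s -> s <= sigma.

Definition csc (x : R) : R := / sin x.

(** the matrix of the theorem, indices x1, x2 in {0, ..., M-1} *)
Definition gM (x1 x2 : nat) : R := if Nat.leb x2 x1 then 1 else -1.

(** The matrix [gM] equals [2 (1 - S)^-1], where [S] is the antiperiodic shift
    [(S w) k = w (k-1)], [(S w) 0 = - w (M-1)].  Hence, with [theta = PI / M],
    the sampled sinusoids [k |-> A cos (k theta) + B sin (k theta)] are right
    singular vectors for [sigma = csc (theta / 2)]; conversely an eigenvector
    of [g^T g] solves a three-term recurrence with antiperiodic boundary
    values, which shows that no eigenvalue exceeds [sigma^2] and that the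
    [sigma^2]-eigenspace is two-dimensional.  For the quantum bound, the
    spectral theorem (imported from MathComp) reduces a density operator to
    pure states; for a pure state the value is a sum of bilinear forms of [g]
    in vectors of norm at most [|psi|] (observables are contractions), each
    bounded by the operator norm [sigma].  The maximally entangled two-qubit
    state with reflections along the singular vectors attains [M sigma]. *)

From Stdlib Require Import Reals Lra Lia.
From Pilot Require Import Defs.
From mathcomp Require ssreflect ssrfun ssrbool eqtype ssrnat fintype bigop.
From mathcomp Require ssralg ssrnum matrix Rstruct sesquilinear spectral.
From mathcomp.real_closed Require complex.
Open Scope R_scope.

Definition Copp (z : C) : C := mkC (- Re z) (- Im z).
Definition C1 : C := RtoC 1.

Lemma C_ext (a b : C) : Re a = Re b -> Im a = Im b -> a = b.
Proof. destruct a, b; simpl; intros; subst; reflexivity. Qed.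

Lemma C_ring_theory :
  ring_theory C0 C1 Cadd Cmul (fun a b => Cadd a (Copp b)) Copp (@eq C).
Proof. constructor; intros; apply C_ext; simpl; ring. Qed.
Add Ring C_ring : C_ring_theory.

Lemma Cconj_add a b : Cconj (Cadd a b) = Cadd (Cconj a) (Cconj b).
Proof. apply C_ext; simpl; ring. Qed.
Lemma Cconj_mul a b : Cconj (Cmul a b) = Cmul (Cconj a) (Cconj b).
Proof. apply C_ext; simpl; ring. Qed.
Lemma Cconj_RtoC r : Cconj (RtoC r) = RtoC r.
Proof. apply C_ext; simpl; ring. Qed.
Lemma RtoC_mul a b : Cmul (RtoC a) (RtoC b) = RtoC (a * b).
Proof. apply C_ext; simpl; ring. Qed.
Lemma RtoC_add a b : Cadd (RtoC a) (RtoC b) = RtoC (a + b).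
Proof. apply C_ext; simpl; ring. Qed.

Lemma Re_RtoC_mul r z : Re (Cmul (RtoC r) z) = r * Re z.
Proof. simpl; ring. Qed.

Definition Cnorm2 (z : C) : R := Re z * Re z + Im z * Im z.

Lemma Cnorm2_nonneg z : 0 <= Cnorm2 z.
Proof. unfold Cnorm2; nra. Qed.

Lemma rsum_S n f : rsum (S n) f = rsum n f + f n.
Proof. reflexivity. Qed.
Lemma rsum_ext n f g : (forall i, (i < n)%nat -> f i = g i) -> rsum n f = rsum n g.
Proof. induction n; simpl; intros H; [reflexivity|]. rewrite IHn, H; auto. Qed.
Lemma rsum_add n f g : rsum n (fun i => f i + g i) = rsum n f + rsum n g.
Proof. induction n; simpl; [ring|]. rewrite IHn; ring. Qed.
Lemma rsum_scal n c f : rsum n (fun i => c * f i) = c * rsum n f.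
Proof. induction n; simpl; [ring|]. rewrite IHn; ring. Qed.
Lemma rsum_const n c : rsum n (fun _ => c) = INR n * c.
Proof. induction n; simpl rsum; [simpl; ring|]. rewrite IHn, S_INR; ring. Qed.
Lemma rsum_opp_sub n f g : rsum n (fun i => f i - g i) = rsum n f - rsum n g.
Proof. induction n; simpl; [ring|]. rewrite IHn; ring. Qed.
Lemma rsum_le n f g : (forall i, (i < n)%nat -> f i <= g i) -> rsum n f <= rsum n g.
Proof.
  induction n; simpl; intros H; [lra|].
  pose proof (H n ltac:(lia)). pose proof (IHn ltac:(auto)). lra.
Qed.
Lemma rsum_exch n m F :
  rsum n (fun i => rsum m (fun j => F i j)) = rsum m (fun j => rsum n (fun i => F i j)).
Proof.
  induction n; simpl.
  - induction m; simpl; [reflexivity|]. rewrite <- IHm; ring.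
  - rewrite IHn, <- rsum_add. reflexivity.
Qed.
Lemma rsum_exch3 n m k F :
  rsum n (fun x => rsum m (fun y => rsum k (fun b => F x y b))) =
  rsum k (fun b => rsum n (fun x => rsum m (fun y => F x y b))).
Proof.
  transitivity (rsum n (fun x => rsum k (fun b => rsum m (fun y => F x y b)))).
  - apply rsum_ext; intros. apply rsum_exch.
  - apply rsum_exch.
Qed.
Lemma rsum_app n m f : rsum (n + m) f = rsum n f + rsum m (fun b => f (n + b)%nat).
Proof.
  induction m; simpl; rewrite ?Nat.add_0_r, ?Nat.add_succ_r; simpl; [ring|].
  rewrite IHm. ring.
Qed.
Lemma rsum_split d1 d2 f :
  rsum (d1 * d2) f = rsum d1 (fun a => rsum d2 (fun b => f (a * d2 + b)%nat)).
Proof.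
  induction d1; [reflexivity|].
  replace (S d1 * d2)%nat with (d1 * d2 + d2)%nat by lia.
  rewrite rsum_app, IHd1. reflexivity.
Qed.

Lemma csum_ext n f g : (forall i, (i < n)%nat -> f i = g i) -> csum n f = csum n g.
Proof. induction n; simpl; intros H; [reflexivity|]. rewrite IHn, H; auto. Qed.
Lemma csum_add n f g : csum n (fun i => Cadd (f i) (g i)) = Cadd (csum n f) (csum n g).
Proof. induction n; simpl; [apply C_ext; simpl; ring|]. rewrite IHn; ring. Qed.
Lemma csum_scal n c f : csum n (fun i => Cmul c (f i)) = Cmul c (csum n f).
Proof. induction n; simpl; [apply C_ext; simpl; ring|]. rewrite IHn; ring. Qed.
Lemma csum_scalr n c f : csum n (fun i => Cmul (f i) c) = Cmul (csum n f) c.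
Proof. induction n; simpl; [apply C_ext; simpl; ring|]. rewrite IHn; ring. Qed.
Lemma csum_exch n m F :
  csum n (fun i => csum m (fun j => F i j)) = csum m (fun j => csum n (fun i => F i j)).
Proof.
  induction n; simpl.
  - induction m; simpl; [reflexivity|]. rewrite <- IHm. apply C_ext; simpl; ring.
  - rewrite IHn, <- csum_add. reflexivity.
Qed.
Lemma csum_app n m f : csum (n + m) f = Cadd (csum n f) (csum m (fun b => f (n + b)%nat)).
Proof.
  induction m; simpl; rewrite ?Nat.add_0_r, ?Nat.add_succ_r; simpl;
    [apply C_ext; simpl; ring|].
  rewrite IHm. ring.
Qed.
Lemma csum_split d1 d2 f :
  csum (d1 * d2) f = csum d1 (fun a => csum d2 (fun b => f (a * d2 + b)%nat)).
Proof.
  induction d1; [reflexivity|].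
  replace (S d1 * d2)%nat with (d1 * d2 + d2)%nat by lia.
  rewrite csum_app, IHd1. reflexivity.
Qed.
Lemma Re_csum n f : Re (csum n f) = rsum n (fun i => Re (f i)).
Proof. induction n; simpl; [reflexivity|]. rewrite IHn; reflexivity. Qed.
Lemma Im_csum n f : Im (csum n f) = rsum n (fun i => Im (f i)).
Proof. induction n; simpl; [reflexivity|]. rewrite IHn; reflexivity. Qed.
Lemma Cconj_csum n f : Cconj (csum n f) = csum n (fun i => Cconj (f i)).
Proof.
  induction n; simpl; [apply C_ext; simpl; ring|]. rewrite Cconj_add, IHn; reflexivity.
Qed.
Lemma csum_RtoC n f : csum n (fun i => RtoC (f i)) = RtoC (rsum n f).
Proof. induction n; simpl; [reflexivity|]. rewrite IHn, RtoC_add; reflexivity. Qed.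

Definition delta (i j : nat) : R := if Nat.eqb i j then 1 else 0.

Lemma csum_delta n l f : (l < n)%nat ->
  csum n (fun k => Cmul (RtoC (delta k l)) (f k)) = f l.
Proof.
  intros Hl.
  assert (Hlow : forall m, (m <= l)%nat ->
            csum m (fun k => Cmul (RtoC (delta k l)) (f k)) = C0).
  { induction m; intros Hm; simpl; [reflexivity|]. rewrite IHm by lia.
    unfold delta. replace (Nat.eqb m l) with false by (symmetry; apply Nat.eqb_neq; lia).
    apply C_ext; simpl; ring. }
  induction n; [lia|]. simpl. destruct (Nat.eq_dec l n) as [->|ne].
  - rewrite Hlow by lia. unfold delta; rewrite Nat.eqb_refl. apply C_ext; simpl; ring.
  - rewrite IHn by lia. unfold delta.
    replace (Nat.eqb n l) with false by (symmetry; apply Nat.eqb_neq; lia).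
    apply C_ext; simpl; ring.
Qed.
Lemma csum_delta' n l f : (l < n)%nat ->
  csum n (fun k => Cmul (RtoC (delta l k)) (f k)) = f l.
Proof.
  intros H. rewrite <- (csum_delta n l f H). apply csum_ext; intros.
  unfold delta. rewrite Nat.eqb_sym. reflexivity.
Qed.

Definition norm2 n (v : CVec) : R := rsum n (fun i => Cnorm2 (v i)).

Lemma Re_inner n u w :
  Re (inner n u w) = rsum n (fun i => Re (u i) * Re (w i) + Im (u i) * Im (w i)).
Proof. unfold inner. rewrite Re_csum. apply rsum_ext; intros; simpl; ring. Qed.

Lemma Re_inner_self n v : Re (inner n v v) = norm2 n v.
Proof. rewrite Re_inner. reflexivity. Qed.

Lemma inner_ext n u u' w w' : (forall i, (i < n)%nat -> u i = u' i) ->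
  (forall i, (i < n)%nat -> w i = w' i) -> inner n u w = inner n u' w'.
Proof. intros H1 H2. unfold inner. apply csum_ext; intros. rewrite H1, H2; auto. Qed.

Lemma inner_scal_r n u c w : inner n u (fun i => Cmul c (w i)) = Cmul c (inner n u w).
Proof. unfold inner. rewrite <- csum_scal. apply csum_ext; intros; ring. Qed.

Lemma inner_scal_l n u c w :
  inner n (fun i => Cmul c (u i)) w = Cmul (Cconj c) (inner n u w).
Proof.
  unfold inner. rewrite <- csum_scal. apply csum_ext; intros. rewrite Cconj_mul; ring.
Qed.

Lemma inner_hermitian n H u v : hermitian n H ->
  inner n u (mapply n H v) = inner n (mapply n H u) v.
Proof.
  intros hH. unfold inner, mapply.
  transitivity (csum n (fun i => csum n (fun j => Cmul (Cconj (u i)) (Cmul (H i j) (v j))))).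
  { apply csum_ext; intros. rewrite csum_scal. reflexivity. }
  rewrite csum_exch. apply csum_ext; intros j Hj.
  rewrite Cconj_csum, <- csum_scalr. apply csum_ext; intros i Hi.
  rewrite Cconj_mul, (hH i j) by auto. ring.
Qed.

Definition orthonormal_eigenbasis (n : nat) (H : CMat) (e : nat -> CVec) (d : nat -> R)
  : Prop :=
  (forall k i, (k < n)%nat -> (i < n)%nat ->
      mapply n H (e k) i = Cmul (RtoC (d k)) (e k i)) /\
  (forall k l, (k < n)%nat -> (l < n)%nat ->
      inner n (e k) (e l) = RtoC (delta k l)) /\
  (forall i j, (i < n)%nat -> (j < n)%nat ->
      csum n (fun k => Cmul (e k i) (Cconj (e k j))) = RtoC (delta i j)) /\
  (forall i j, (i < n)%nat -> (j < n)%nat ->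
      H i j = csum n (fun k => Cmul (RtoC (d k)) (Cmul (e k i) (Cconj (e k j))))).

(** The spectral theorem for hermitian matrices is transported from MathComp's
    [spectral] library, through the isomorphism between [C] and [R[i]]. *)
Module SpectralMC.
Import ssreflect ssrfun ssrbool eqtype ssrnat fintype bigop ssralg ssrnum matrix.
Import Rstruct complex sesquilinear spectral.
Import GRing.Theory Num.Theory.
Local Open Scope ring_scope.
Local Open Scope sesquilinear_scope.

Definition c2m (z : Defs.C) : R[i] := Complex (Defs.Re z) (Defs.Im z).
Definition m2c (z : R[i]) : Defs.C := Defs.mkC (complex.Re z) (complex.Im z).

Lemma c2mK z : m2c (c2m z) = z. Proof. by case: z. Qed.
Lemma m2cK z : c2m (m2c z) = z. Proof. by case: z. Qed.
Lemma c2m_inj a b : c2m a = c2m b -> a = b.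
Proof. by move=> h; rewrite -(c2mK a) h c2mK. Qed.
Lemma c2m_mul a b : c2m (Cmul a b) = c2m a * c2m b. Proof. by []. Qed.
Lemma c2m_conj a : c2m (Cconj a) = (c2m a)^*. Proof. by []. Qed.
Lemma c2m_RtoC r : c2m (RtoC r) = r%:C%C. Proof. by []. Qed.
Lemma c2m_csum n f : c2m (csum n f) = \sum_(i < n) c2m (f i).
Proof.
elim: n => [|n IH]; first by rewrite big_ord0.
by rewrite big_ord_recr /= -IH.
Qed.

Lemma delta_ord (n : nat) (k l : 'I_n) : (delta k l)%:C%C = ((k == l)%:R : R[i]).
Proof.
rewrite /delta; case: (PeanoNat.Nat.eqb_spec k l) => [/val_inj ->|ne].
  by rewrite eqxx.
by have -> : (k == l) = false by apply/negP => /eqP E; apply: ne; rewrite E.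
Qed.

Lemma unitary_diagonalization n (A : 'M[R[i]]_n) : A \is hermsymmx ->
  exists (P : 'M[R[i]]_n) (sp : 'rV[R[i]]_n),
    P *m P^t* = 1%:M /\ P^t* *m P = 1%:M /\ A *m P^t* = P^t* *m diag_mx sp /\
    forall k, (complex.Re (sp ord0 k))%:C%C = sp ord0 k.
Proof.
move=> Aherm; have /orthomx_spectralP HA := hermitian_normalmx Aherm.
have Preal := hermitian_spectral_diag_real Aherm.
set P := spectralmx A in HA; set sp := spectral_diag A in HA Preal.
have PPt : P *m P^t* = 1%:M by apply/unitarymxP; apply: spectral_unitarymx.
have iP : invmx P = P^t* by apply/invmx_unitary/spectral_unitarymx.
exists P, sp; split; [done | split; [|split]].
- by rewrite -iP mulVmx // unitarymx_unit // spectral_unitarymx.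
- by rewrite {1}HA iP -!mulmxA PPt mulmx1.
- by move=> k; apply: RRe_real; apply: (mxOverP Preal).
Qed.

(** The conjugated rows of [P] form the eigenbasis of [H]. *)
Lemma hermitian_eigenbasis n H : Defs.hermitian n H ->
  exists e d, orthonormal_eigenbasis n H e d.
Proof.
case: n => [|m] hH.
  exists (fun _ _ => C0), (fun _ => 0%R).
  by split; [|split; [|split]] => ? ? /leP.
set A : 'M[R[i]]_m.+1 := \matrix_(i, j) c2m (H i j).
have Aherm : A \is hermsymmx.
  apply/is_hermitianmxP; rewrite expr0 scale1r; apply/matrixP => i j.
  rewrite !mxE (hH i j) //; apply/leP; exact: ltn_ord.
have [P [sp [PPt [PtP [AE spR]]]]] := @unitary_diagonalization _ A Aherm.
have entry (M1 M2 : 'M[R[i]]_m.+1) i j : M1 = M2 -> M1 (inord i) (inord j) = M2 (inord i) (inord j).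
  by move->.
exists (fun k i => m2c ((P (inord k) (inord i))^*)),
       (fun k => complex.Re (sp ord0 (inord k))).
split; [|split; [|split]].
- move=> k i /leP hk /leP hi; apply: c2m_inj.
  rewrite c2m_mul c2m_RtoC m2cK spR mulrC /Defs.mapply c2m_csum.
  have := entry _ _ i k AE; rewrite mul_mx_diag !mxE => <-.
  by apply: eq_bigr => j _; rewrite c2m_mul m2cK !mxE inord_val inordK.
- move=> k l /leP hk /leP hl; apply: c2m_inj.
  rewrite c2m_RtoC /Defs.inner c2m_csum.
  have -> : (delta k l)%:C%C = (delta (@inord m k) (@inord m l))%:C%C by rewrite !inordK.
  rewrite delta_ord; have := entry _ _ k l PPt; rewrite !mxE => <-.
  by apply: eq_bigr => j _; rewrite c2m_mul c2m_conj !m2cK !mxE inord_val conjCK.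
- move=> i j /leP hi /leP hj; apply: c2m_inj.
  rewrite c2m_RtoC c2m_csum.
  have -> : (delta i j)%:C%C = (delta (@inord m i) (@inord m j))%:C%C by rewrite !inordK.
  rewrite delta_ord; have := entry _ _ i j PtP; rewrite !mxE => <-.
  by apply: eq_bigr => k _; rewrite c2m_mul c2m_conj !m2cK !mxE inord_val conjCK.
- move=> i j /leP hi /leP hj; apply: c2m_inj.
  have HA : A = P^t* *m diag_mx sp *m P by rewrite -AE -mulmxA PtP mulmx1.
  have := entry _ _ i j HA; rewrite mxE inordK // inordK // => ->.
  rewrite c2m_csum mxE; apply: eq_bigr => k _.
  rewrite mul_mx_diag !mxE c2m_mul c2m_RtoC spR c2m_mul c2m_conj !m2cK conjCK.
  by rewrite inord_val mulrA [_ * sp ord0 k]mulrC.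
Qed.
End SpectralMC.

Section Eigenbasis.
Variable n : nat.
Variable H : CMat.
Variable e : nat -> CVec.
Variable d : nat -> R.
Hypothesis hH : hermitian n H.
Hypothesis Hbasis : orthonormal_eigenbasis n H e d.

Definition coef (v : CVec) (k : nat) : C := inner n (e k) v.

Lemma expansion v i : (i < n)%nat -> v i = csum n (fun k => Cmul (e k i) (coef v k)).
Proof.
  destruct Hbasis as [_ [_ [Hcomp _]]]. intros Hi. unfold coef, inner.
  transitivity (csum n (fun j => Cmul (RtoC (delta i j)) (v j))).
  { symmetry. apply csum_delta'. auto. }
  transitivity (csum n (fun j =>
                  csum n (fun k => Cmul (Cmul (e k i) (Cconj (e k j))) (v j)))).
  { apply csum_ext; intros j Hj. rewrite <- Hcomp by auto. rewrite csum_scalr. reflexivity. }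
  rewrite csum_exch. apply csum_ext; intros k Hk. rewrite <- csum_scal.
  apply csum_ext; intros; ring.
Qed.

Lemma parseval v w :
  inner n v w = csum n (fun k => Cmul (Cconj (coef v k)) (coef w k)).
Proof.
  unfold inner at 1.
  transitivity (csum n (fun i =>
                  Cmul (Cconj (csum n (fun k => Cmul (e k i) (coef v k)))) (w i))).
  { apply csum_ext; intros i Hi. rewrite <- expansion; auto. }
  transitivity (csum n (fun i => csum n (fun k =>
                  Cmul (Cconj (coef v k)) (Cmul (Cconj (e k i)) (w i))))).
  { apply csum_ext; intros i Hi. rewrite Cconj_csum, <- csum_scalr.
    apply csum_ext; intros. rewrite Cconj_mul. ring. }
  rewrite csum_exch. apply csum_ext; intros k Hk. rewrite csum_scal. reflexivity.
Qed.

Lemma coef_apply v k : (k < n)%nat -> coef (mapply n H v) k = Cmul (RtoC (d k)) (coef v k).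
Proof.
  destruct Hbasis as [Heig _]. intros Hk. unfold coef.
  rewrite inner_hermitian by auto.
  rewrite (inner_ext n _ (fun i => Cmul (RtoC (d k)) (e k i)) v v).
  - rewrite inner_scal_l, Cconj_RtoC. reflexivity.
  - intros; apply Heig; auto.
  - auto.
Qed.

Lemma norm2_coef v : norm2 n v = rsum n (fun k => Cnorm2 (coef v k)).
Proof.
  rewrite <- Re_inner_self, parseval, Re_csum. apply rsum_ext; intros.
  unfold Cnorm2; simpl; ring.
Qed.

Lemma norm2_apply_coef v :
  norm2 n (mapply n H v) = rsum n (fun k => d k * d k * Cnorm2 (coef v k)).
Proof.
  rewrite <- Re_inner_self, parseval, Re_csum. apply rsum_ext; intros.
  rewrite coef_apply by auto. unfold Cnorm2; simpl; ring.
Qed.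

Lemma quadratic_form_coef v :
  Re (inner n v (mapply n H v)) = rsum n (fun k => d k * Cnorm2 (coef v k)).
Proof.
  rewrite parseval, Re_csum. apply rsum_ext; intros.
  rewrite coef_apply by auto. unfold Cnorm2; simpl; ring.
Qed.

(** Each [d k] is an eigenvalue, since the unit vector [e k] is nonzero. *)
Lemma basis_eigenvalue k : (k < n)%nat -> eigenvalue n H (RtoC (d k)).
Proof.
  destruct Hbasis as [Heig [Horth _]]. intros Hk. exists (e k). split.
  2:{ intros i Hi. apply Heig; auto. }
  apply Classical_Prop.NNPP. intros Hzero.
  assert (E : inner n (e k) (e k) = RtoC 0).
  { unfold inner. transitivity (csum n (fun _ => RtoC 0)).
    - apply csum_ext; intros i Hi.
      destruct (Classical_Prop.classic (e k i = C0)) as [->|Hne].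
      + apply C_ext; simpl; ring.
      + exfalso. apply Hzero. eauto.
    - rewrite csum_RtoC, rsum_const. f_equal. ring. }
  rewrite Horth in E by auto. unfold delta in E. rewrite Nat.eqb_refl in E.
  apply (f_equal Re) in E. simpl in E. lra.
Qed.
End Eigenbasis.

Lemma hermitian_spectral_forms n H : hermitian n H ->
  exists (coords : CVec -> nat -> C) (d : nat -> R),
  (forall v, norm2 n v = rsum n (fun k => Cnorm2 (coords v k))) /\
  (forall v, norm2 n (mapply n H v) = rsum n (fun k => d k * d k * Cnorm2 (coords v k))) /\
  (forall v, Re (inner n v (mapply n H v)) = rsum n (fun k => d k * Cnorm2 (coords v k))) /\
  (forall k, (k < n)%nat -> eigenvalue n H (RtoC (d k))).
Proof.
  intros hH. destruct (SpectralMC.hermitian_eigenbasis n H hH) as [e [d Hb]].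
  exists (coef n e), d. split; [|split; [|split]].
  - apply norm2_coef with (H := H) (d := d); auto.
  - apply norm2_apply_coef; auto.
  - apply quadratic_form_coef; auto.
  - apply basis_eigenvalue with (e := e); auto.
Qed.

(** Observables are contractions: their eigenvalues lie in [[-1,1]]. *)
Lemma observable_contraction n A v : observable n A -> norm2 n (mapply n A v) <= norm2 n v.
Proof.
  intros [hA hev]. destruct (hermitian_spectral_forms n A hA) as [c [d [Hn [HA [_ Hev]]]]].
  rewrite HA, Hn. apply rsum_le. intros k Hk.
  destruct (hev _ (Hev k Hk)) as [_ Hd]. simpl in Hd.
  pose proof (Cnorm2_nonneg (c v k)).
  assert (d k * d k <= 1) by nra. nra.
Qed.

Lemma trace_mixture n (rho : CMat) (e : nat -> CVec) (p : nat -> R) :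
  (forall i j, (i < n)%nat -> (j < n)%nat ->
      rho i j = csum n (fun k => Cmul (RtoC (p k)) (Cmul (e k i) (Cconj (e k j))))) ->
  forall Z, trace n (mmul n rho Z) =
            csum n (fun k => Cmul (RtoC (p k)) (inner n (e k) (mapply n Z (e k)))).
Proof.
  intros Hdec Z. unfold trace, mmul, inner, mapply.
  transitivity (csum n (fun i => csum n (fun j => csum n (fun k =>
      Cmul (RtoC (p k)) (Cmul (Cconj (e k j)) (Cmul (Z j i) (e k i))))))).
  { apply csum_ext; intros i Hi. apply csum_ext; intros j Hj. rewrite Hdec by auto.
    rewrite <- csum_scalr. apply csum_ext; intros. ring. }
  transitivity (csum n (fun i => csum n (fun k => csum n (fun j =>
      Cmul (RtoC (p k)) (Cmul (Cconj (e k j)) (Cmul (Z j i) (e k i))))))).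
  { apply csum_ext; intros. apply csum_exch. }
  rewrite csum_exch. apply csum_ext; intros k Hk. rewrite csum_exch.
  rewrite <- csum_scal. apply csum_ext; intros j Hj. rewrite <- csum_scal, <- csum_scal.
  apply csum_ext; intros. ring.
Qed.

Lemma density_mixture n rho : density n rho ->
  exists (e : nat -> CVec) (p : nat -> R),
    (forall k, (k < n)%nat -> 0 <= p k) /\ rsum n p = 1 /\
    (forall k, (k < n)%nat -> norm2 n (e k) = 1) /\
    forall Z, trace n (mmul n rho Z) =
              csum n (fun k => Cmul (RtoC (p k)) (inner n (e k) (mapply n Z (e k)))).
Proof.
  intros [[hrho hpsd] htr].
  destruct (SpectralMC.hermitian_eigenbasis n rho hrho) as [e [p [Heig [Horth [_ Hdec]]]]].
  pose proof (trace_mixture n rho e p Hdec) as Htrace.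
  assert (Hunit : forall k, (k < n)%nat -> inner n (e k) (e k) = RtoC 1).
  { intros k Hk. rewrite Horth by auto. unfold delta. rewrite Nat.eqb_refl. reflexivity. }
  exists e, p. split; [|split; [|split]]; auto.
  - (* [p k = <e k, rho e k> >= 0] *)
    intros k Hk. destruct (hpsd (e k)) as [_ Hre].
    rewrite (inner_ext _ (e k) (e k) _ (fun i => Cmul (RtoC (p k)) (e k i))) in Hre;
      [|auto|intros; apply Heig; auto].
    rewrite inner_scal_r, Hunit in Hre by auto. simpl in Hre. lra.
  - (* [sum_k p k = tr rho = 1], taking [Z] the identity *)
    pose proof (Htrace (fun i j => RtoC (delta i j))) as E.
    assert (Hid : trace n (mmul n rho (fun i j => RtoC (delta i j))) = trace n rho).
    { unfold trace, mmul. apply csum_ext; intros i Hi.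
      transitivity (csum n (fun k => Cmul (RtoC (delta k i)) (rho i k))).
      - apply csum_ext; intros; ring.
      - apply (csum_delta n i (fun k => rho i k)); auto. }
    rewrite Hid, htr in E. apply (f_equal Re) in E. simpl in E. rewrite E, Re_csum.
    apply rsum_ext; intros k Hk.
    rewrite (inner_ext _ (e k) (e k) _ (e k)); [|auto|].
    + rewrite Hunit by auto. simpl. ring.
    + intros i Hi. unfold mapply. apply csum_delta'. auto.
  - intros k Hk. rewrite <- Re_inner_self, Hunit by auto. reflexivity.
Qed.

(** ** The matrix [gM] as an inverse difference operator *)

Definition gapply (M : nat) (v : nat -> R) (k : nat) : R := rsum M (fun l => gM k l * v l).
Definition gtapply (M : nat) (w : nat -> R) (j : nat) : R := rsum M (fun k => gM k j * w k).

(** A row of [gM] is [+1] up to the diagonal and [-1] after it. *)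
Lemma gapply_partial_sums n i f :
  rsum n (fun l => gM i l * f l) = 2 * rsum (Nat.min n (S i)) f - rsum n f.
Proof.
  induction n; [simpl; ring|]. rewrite rsum_S, IHn. unfold gM.
  destruct (Nat.leb_spec n i).
  - replace (Nat.min (S n) (S i)) with (S n) by lia.
    replace (Nat.min n (S i)) with n by lia. rewrite !rsum_S; ring.
  - replace (Nat.min (S n) (S i)) with (S i) by lia.
    replace (Nat.min n (S i)) with (S i) by lia. rewrite !rsum_S; ring.
Qed.

(** A column of [gM] is [-1] above the diagonal and [+1] from it on. *)
Lemma gtapply_partial_sums n j f :
  rsum n (fun k => gM k j * f k) = rsum n f - 2 * rsum (Nat.min n j) f.
Proof.
  induction n; [simpl; ring|]. rewrite rsum_S, IHn. unfold gM.
  destruct (Nat.leb_spec j n).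
  - replace (Nat.min (S n) j) with j by lia.
    replace (Nat.min n j) with j by lia. rewrite !rsum_S; ring.
  - replace (Nat.min (S n) j) with (S n) by lia.
    replace (Nat.min n j) with n by lia. rewrite !rsum_S; ring.
Qed.

Section DifferenceEquations.
Variable M : nat.
Hypothesis hM : (1 <= M)%nat.

(** [g = 2 (1 - S)^-1] for the antiperiodic shift [S]: *)
Lemma gapply_step v k : (1 <= k < M)%nat -> gapply M v k - gapply M v (k - 1) = 2 * v k.
Proof.
  intros H. unfold gapply. rewrite !gapply_partial_sums.
  replace (Nat.min M (S k)) with (S k) by lia.
  replace (Nat.min M (S (k - 1))) with k by lia. simpl. ring.
Qed.

Lemma gapply_wrap v : gapply M v 0 + gapply M v (M - 1) = 2 * v 0%nat.
Proof.
  unfold gapply. rewrite !gapply_partial_sums.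
  replace (Nat.min M 1) with 1%nat by lia.
  replace (Nat.min M (S (M - 1))) with M by lia. simpl. ring.
Qed.

(** and likewise [g^T = 2 (1 - S^T)^-1]. *)
Lemma gtapply_step w k : (k + 1 < M)%nat -> gtapply M w k - gtapply M w (k + 1) = 2 * w k.
Proof.
  intros H. unfold gtapply. rewrite !gtapply_partial_sums.
  replace (Nat.min M k) with k by lia.
  replace (Nat.min M (k + 1)) with (S k) by lia. simpl. ring.
Qed.

Lemma gtapply_wrap w : gtapply M w (M - 1) + gtapply M w 0 = 2 * w (M - 1)%nat.
Proof.
  unfold gtapply. rewrite !gtapply_partial_sums.
  replace (Nat.min M (M - 1)) with (M - 1)%nat by lia.
  replace (Nat.min M 0) with 0%nat by lia.
  replace M with (S (M - 1)) at 1 3 by lia. simpl. ring.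
Qed.

Lemma gapply_inverse f w :
  (forall k, (1 <= k < M)%nat -> f k = (w k - w (k - 1)%nat) / 2) ->
  f 0%nat = (w 0%nat + w (M - 1)%nat) / 2 ->
  forall i, (i < M)%nat -> gapply M f i = w i.
Proof.
  intros Hk H0 i Hi.
  assert (Hpartial : forall m, (1 <= m <= M)%nat ->
            rsum m f = (w (m - 1)%nat + w (M - 1)%nat) / 2).
  { induction m; intros Hm; [lia|].
    destruct (Nat.eq_dec m 0) as [->|ne].
    - simpl. rewrite H0. field.
    - simpl rsum. rewrite IHm, Hk by lia.
      replace (S m - 1)%nat with m by lia. field. }
  unfold gapply. rewrite gapply_partial_sums. replace (Nat.min M (S i)) with (S i) by lia.
  rewrite !Hpartial by lia. replace (S i - 1)%nat with i by lia. field.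
Qed.

Lemma gtapply_inverse f w :
  (forall k, (k + 1 < M)%nat -> f k = (w k - w (k + 1)%nat) / 2) ->
  f (M - 1)%nat = (w (M - 1)%nat + w 0%nat) / 2 ->
  forall j, (j < M)%nat -> gtapply M f j = w j.
Proof.
  intros Hk HL j Hj.
  assert (Hpartial : forall m, (m <= M - 1)%nat -> rsum m f = (w 0%nat - w m) / 2).
  { induction m; intros Hm; [simpl; field|].
    simpl rsum. rewrite IHm, Hk by lia. replace (m + 1)%nat with (S m) by lia. field. }
  assert (Htotal : rsum M f = w 0%nat).
  { replace M with (S (M - 1)) by lia. simpl rsum. rewrite Hpartial, HL by lia. field. }
  unfold gtapply. rewrite gtapply_partial_sums, Htotal.
  replace (Nat.min M j) with j by lia. rewrite Hpartial by lia. field.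
Qed.
End DifferenceEquations.

Lemma gtg_apply M v i :
  rsum M (fun k => gtg M gM i k * v k) = gtapply M (gapply M v) i.
Proof.
  unfold gtg, gtapply, gapply.
  transitivity (rsum M (fun k => rsum M (fun l => gM l i * (gM l k * v k)))).
  { apply rsum_ext; intros k Hk. rewrite (Rmult_comm _ (v k)), <- rsum_scal.
    apply rsum_ext; intros; ring. }
  rewrite rsum_exch. apply rsum_ext; intros. rewrite rsum_scal. reflexivity.
Qed.

Lemma gtg_eigvec_ext M lam v w :
  (forall i, v i = w i) -> gtg_eigvec M gM lam v -> gtg_eigvec M gM lam w.
Proof.
  intros Heq Hv i Hi. rewrite <- Heq, <- (Hv i Hi).
  apply rsum_ext; intros; rewrite Heq; auto.
Qed.

(** An eigenvector of [g^T g = 4 ((1 - S^T) (1 - S))^-1] satisfies the discrete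
    Helmholtz equation [4 v = lam (2 v i - v (i-1) - v (i+1))] with
    antiperiodic boundary values [v (-1) = - v (M-1)], [v M = - v 0]. *)
Lemma gtg_eigvec_recurrence M lam v : (2 <= M)%nat -> gtg_eigvec M gM lam v ->
  (forall i, (1 <= i)%nat -> (i + 1 < M)%nat ->
      4 * v i = lam * (2 * v i - v (i - 1)%nat - v (i + 1)%nat)) /\
  4 * v 0%nat = lam * (2 * v 0%nat - v 1%nat + v (M - 1)%nat) /\
  4 * v (M - 1)%nat = lam * (2 * v (M - 1)%nat - v (M - 2)%nat + v 0%nat).
Proof.
  intros HM Hv.
  set (w := gapply M v).
  assert (Hw : forall i, (i < M)%nat -> gtapply M w i = lam * v i).
  { intros i Hi. unfold w. rewrite <- gtg_apply. apply Hv; auto. }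
  split; [|split].
  - intros i H1 H2.
    pose proof (gapply_step M ltac:(lia) v i ltac:(lia)) as E1.
    pose proof (gtapply_step M ltac:(lia) w i H2) as E2.
    pose proof (gtapply_step M ltac:(lia) w (i - 1) ltac:(lia)) as E3.
    replace (i - 1 + 1)%nat with i in E3 by lia.
    rewrite !Hw in E2, E3 by lia. fold w in E1. nra.
  - pose proof (gapply_wrap M ltac:(lia) v) as E1.
    pose proof (gtapply_step M ltac:(lia) w 0 ltac:(lia)) as E2.
    pose proof (gtapply_wrap M ltac:(lia) w) as E3.
    rewrite !Hw in E2, E3 by lia. fold w in E1. simpl in E2. nra.
  - pose proof (gapply_step M ltac:(lia) v (M - 1) ltac:(lia)) as E1.
    pose proof (gtapply_step M ltac:(lia) w (M - 2) ltac:(lia)) as E2.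
    pose proof (gtapply_wrap M ltac:(lia) w) as E3.
    replace (M - 2 + 1)%nat with (M - 1)%nat in E2 by lia.
    replace (M - 1 - 1)%nat with (M - 2)%nat in E1 by lia.
    rewrite !Hw in E2, E3 by lia. fold w in E1. nra.
Qed.

Definition theta (M : nat) : R := PI / INR M.
Definition half_sin (M : nat) : R := sin (theta M / 2).
Definition sigma (M : nat) : R := csc (PI / (2 * INR M)).

(** Sampled sinusoids of frequency [theta M] (right singular vectors) and their
    images under [g] (left singular vectors, up to the factor [sigma M]). *)
Definition mode (M : nat) (A B x : R) : R := A * cos (x * theta M) + B * sin (x * theta M).
Definition dual_mode (M : nat) (A B x : R) : R :=
  (A * sin ((x + /2) * theta M) - B * cos ((x + /2) * theta M)) / half_sin M.

Lemma sinusoid_three_term a A B x :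
  A * cos ((x + 1) * a) + B * sin ((x + 1) * a) =
  2 * cos a * (A * cos (x * a) + B * sin (x * a)) - (A * cos ((x - 1) * a) + B * sin ((x - 1) * a)).
Proof.
  replace ((x + 1) * a) with (x * a + a) by ring.
  replace ((x - 1) * a) with (x * a - a) by ring.
  rewrite sin_plus, sin_minus, cos_plus, cos_minus. ring.
Qed.

Lemma three_term_solution (M : nat) a v : 0 < sin a ->
  (forall i, (1 <= i)%nat -> (i + 1 < M)%nat -> v (i + 1)%nat = 2 * cos a * v i - v (i - 1)%nat) ->
  forall j, (j < M)%nat ->
  v j = v 0%nat * cos (INR j * a) + ((v 1%nat - v 0%nat * cos a) / sin a) * sin (INR j * a).
Proof.
  intros Hs Hrec.
  set (B := (v 1%nat - v 0%nat * cos a) / sin a).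
  assert (Hpair : forall j, (j + 1 < M)%nat ->
     v j = v 0%nat * cos (INR j * a) + B * sin (INR j * a) /\
     v (S j) = v 0%nat * cos (INR (S j) * a) + B * sin (INR (S j) * a)).
  { induction j; intros Hj.
    - simpl INR. rewrite Rmult_0_l, cos_0, sin_0, Rmult_1_l. split; [ring|].
      unfold B. field. lra.
    - destruct (IHj ltac:(lia)) as [E1 E2]. split; [exact E2|].
      replace (S (S j)) with (S j + 1)%nat by lia.
      rewrite Hrec by lia. replace (S j - 1)%nat with j by lia.
      rewrite E2, E1, plus_INR. simpl (INR 1).
      rewrite (sinusoid_three_term a (v 0%nat) B (INR (S j))).
      replace (INR (S j) - 1) with (INR j) by (rewrite S_INR; ring). ring. }
  intros j Hj. destruct j.
  - simpl INR. rewrite Rmult_0_l, cos_0, sin_0. ring.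
  - apply (Hpair j). lia.
Qed.

Section Modes.
Variable M : nat.
Hypothesis hM : (2 <= M)%nat.

Lemma INR_M_ge2 : 2 <= INR M.
Proof. replace 2 with (INR 2) by (simpl; ring). apply le_INR; lia. Qed.
Lemma theta_pos : 0 < theta M.
Proof.
  unfold theta. pose proof INR_M_ge2. pose proof PI_RGT_0. apply Rdiv_lt_0_compat; lra.
Qed.
Lemma theta_le : theta M <= PI / 2.
Proof.
  unfold theta. pose proof INR_M_ge2. pose proof PI_RGT_0.
  apply Rmult_le_compat_l; [lra|]. apply Rinv_le_contravar; lra.
Qed.
Lemma M_theta : INR M * theta M = PI.
Proof. unfold theta. pose proof INR_M_ge2. field. lra. Qed.
Lemma half_sin_pos : 0 < half_sin M.
Proof.
  unfold half_sin. pose proof theta_pos. pose proof theta_le. pose proof PI_RGT_0.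
  apply sin_gt_0; lra.
Qed.
Lemma sigma_eq : sigma M = / half_sin M.
Proof.
  unfold sigma, csc, half_sin, theta. pose proof INR_M_ge2. f_equal. f_equal. field. lra.
Qed.
Lemma sigma_pos : 0 < sigma M.
Proof. rewrite sigma_eq. apply Rinv_0_lt_compat, half_sin_pos. Qed.
Lemma cos_theta : cos (theta M) = 1 - 2 * half_sin M * half_sin M.
Proof. unfold half_sin. rewrite <- cos_2a_sin. f_equal. field. Qed.
Lemma sin_theta_pos : 0 < sin (theta M).
Proof.
  pose proof theta_pos. pose proof theta_le. pose proof PI_RGT_0. apply sin_gt_0; lra.
Qed.

Lemma dual_mode_step A B x : dual_mode M A B x - dual_mode M A B (x - 1) = 2 * mode M A B x.
Proof.
  unfold dual_mode, mode. pose proof half_sin_pos. unfold half_sin in *.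
  replace ((x + /2) * theta M) with (x * theta M + theta M / 2) by field.
  replace ((x - 1 + /2) * theta M) with (x * theta M - theta M / 2) by field.
  rewrite sin_plus, sin_minus, cos_plus, cos_minus. field. lra.
Qed.

Lemma mode_step A B x :
  mode M A B x - mode M A B (x + 1) = 2 * half_sin M * half_sin M * dual_mode M A B x.
Proof.
  unfold dual_mode, mode. pose proof half_sin_pos. unfold half_sin in *.
  replace (x * theta M) with ((x + /2) * theta M - theta M / 2) by field.
  replace ((x + 1) * theta M) with ((x + /2) * theta M + theta M / 2) by field.
  rewrite sin_plus, sin_minus, cos_plus, cos_minus. field. lra.
Qed.

Lemma mode_antiperiodic A B x : mode M A B (x + INR M) = - mode M A B x.
Proof.
  unfold mode. replace ((x + INR M) * theta M) with (x * theta M + PI).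
  - rewrite neg_sin, neg_cos; ring.
  - rewrite <- M_theta; ring.
Qed.

Lemma dual_mode_antiperiodic A B x : dual_mode M A B (x + INR M) = - dual_mode M A B x.
Proof.
  unfold dual_mode. pose proof half_sin_pos.
  replace ((x + INR M + /2) * theta M) with ((x + /2) * theta M + PI).
  - rewrite neg_sin, neg_cos; field; lra.
  - rewrite <- M_theta; ring.
Qed.

Lemma gapply_mode A B :
  forall k, (k < M)%nat -> gapply M (fun j => mode M A B (INR j)) k = dual_mode M A B (INR k).
Proof.
  pose proof half_sin_pos.
  apply gapply_inverse; [lia| |].
  - intros k Hk. rewrite minus_INR by lia. simpl (INR 1).
    pose proof (dual_mode_step A B (INR k)). lra.
  - rewrite minus_INR by lia. simpl (INR 1). simpl (INR 0).
    replace (INR M - 1) with (-1 + INR M) by ring. rewrite dual_mode_antiperiodic.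
    pose proof (dual_mode_step A B 0) as E. replace (0 - 1) with (-1) in E by ring. lra.
Qed.

Lemma mode_singular_vector A B :
  gtg_eigvec M gM (sigma M * sigma M) (fun j => mode M A B (INR j)).
Proof.
  intros i Hi. rewrite gtg_apply. pose proof half_sin_pos.
  transitivity (gtapply M (fun k => dual_mode M A B (INR k)) i).
  { unfold gtapply. apply rsum_ext. intros k Hk. rewrite gapply_mode; auto. }
  apply (gtapply_inverse M ltac:(lia) _ (fun j => sigma M * sigma M * mode M A B (INR j)));
    [| |auto]; rewrite sigma_eq.
  - intros k Hk. rewrite plus_INR. simpl (INR 1).
    pose proof (mode_step A B (INR k)). field_simplify_eq; [|lra]. nra.
  - simpl (INR 0).
    pose proof (mode_step A B (INR (M - 1))) as E.
    replace (INR (M - 1) + 1) with (0 + INR M) in E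
      by (rewrite minus_INR by lia; simpl; ring).
    rewrite mode_antiperiodic in E. field_simplify_eq; [|lra]. nra.
Qed.
End Modes.

(** ** The spectrum of [g^T g] *)

Lemma gtg_eigvec_interior M lam a v : (2 <= M)%nat -> 0 < lam -> cos a = 1 - 2 / lam ->
  gtg_eigvec M gM lam v ->
  forall i, (1 <= i)%nat -> (i + 1 < M)%nat -> v (i + 1)%nat = 2 * cos a * v i - v (i - 1)%nat.
Proof.
  intros HM Hlam Ha Hv i Hi1 Hi2.
  destruct (gtg_eigvec_recurrence M lam v HM Hv) as [Hint _].
  specialize (Hint i Hi1 Hi2). rewrite Ha. field_simplify_eq; [|lra]. nra.
Qed.

Lemma antiperiodic_sinusoid_zero L a A B : 0 < sin a -> 0 < L * a < PI ->
  (A * cos ((L - 1) * a) + B * sin ((L - 1) * a)) + (A * cos (-1 * a) + B * sin (-1 * a)) = 0 ->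
  (A * cos (L * a) + B * sin (L * a)) + A = 0 ->
  A = 0 /\ B = 0.
Proof.
  intros Hsa HLa E1 E2.
  replace ((L - 1) * a) with (L * a - a) in E1 by ring.
  replace (-1 * a) with (- a) in E1 by ring.
  rewrite cos_minus, sin_minus, cos_neg, sin_neg in E1.
  assert (Hs : 0 < sin (L * a)) by (apply sin_gt_0; lra).
  pose proof (sin2_cos2 (L * a)) as Hcs. unfold Rsqr in Hcs.
  set (c := cos (L * a)) in *. set (s := sin (L * a)) in *.
  set (ca := cos a) in *. set (sa := sin a) in *.
  assert (Hc : 0 < 1 + c) by nra.
  (* Eliminating [ca] between the two conditions gives [A s = B (1 + c)]. *)
  assert (E3 : sa * (A * s - B * (1 + c)) = 0).
  { replace (sa * (A * s - B * (1 + c))) with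
      ((A * (c * ca + s * sa) + B * (s * ca - c * sa) + (A * ca + B * - sa))
       - ca * (A * c + B * s + A)) by ring.
    rewrite E2. lra. }
  assert (E4 : A * s = B * (1 + c)) by (destruct (Rmult_integral _ _ E3); lra).
  assert (E5 : A * (2 + 2 * c) = 0).
  { replace (A * (2 + 2 * c)) with
      ((1 + c) * (A * c + B * s + A) + s * (A * s - B * (1 + c)) - A * (s * s + c * c - 1))
      by ring.
    rewrite E2, E4, Hcs. ring. }
  assert (HA : A = 0) by (destruct (Rmult_integral _ _ E5); lra).
  split; [exact HA|].
  rewrite HA in E4. assert (HB : B * (1 + c) = 0) by lra.
  destruct (Rmult_integral _ _ HB); lra.
Qed.

Section Spectrum.
Variable M : nat.
Hypothesis hM : (2 <= M)%nat.

Lemma large_eigenvalue_frequency lam : sigma M * sigma M < lam ->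
  exists a, 0 < a < theta M /\ cos a = 1 - 2 / lam.
Proof.
  intros Hlam.
  pose proof (half_sin_pos M hM) as Hs2. pose proof (sigma_eq M hM) as Hse.
  pose proof (cos_theta M). pose proof (theta_pos M hM). pose proof (theta_le M hM).
  pose proof PI_RGT_0.
  assert (Hlp : 0 < lam) by nra.
  assert (Hinv : / lam < half_sin M * half_sin M).
  { rewrite Hse in Hlam. rewrite <- Rinv_mult in Hlam.
    rewrite <- (Rinv_inv (half_sin M * half_sin M)).
    apply Rinv_lt_contravar; [|exact Hlam].
    apply Rmult_lt_0_compat; [apply Rinv_0_lt_compat; nra|lra]. }
  assert (Hil : 0 < / lam) by (apply Rinv_0_lt_compat; lra).
  set (c := 1 - 2 / lam).
  assert (Hc1 : c < 1) by (unfold c, Rdiv; lra).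
  assert (Hc2 : cos (theta M) < c) by (unfold c, Rdiv; lra).
  assert (Hcth : 0 <= cos (theta M)) by (apply cos_ge_0; lra).
  exists (acos c).
  pose proof (acos_bound c). assert (Hca : cos (acos c) = c) by (apply cos_acos; lra).
  split; [split|exact Hca].
  - destruct (Rle_lt_or_eq_dec 0 (acos c)) as [|E]; [lra|auto|].
    rewrite <- E, cos_0 in Hca. lra.
  - apply cos_decreasing_0; lra.
Qed.

Lemma sigma_singular_value : singular_value M gM (sigma M).
Proof.
  split; [pose proof (sigma_pos M hM); lra|].
  exists (fun j => mode M 1 0 (INR j)). split.
  - exists 0%nat. split; [lia|]. unfold mode. simpl INR.
    rewrite Rmult_0_l, cos_0, sin_0. lra.
  - apply mode_singular_vector; auto.
Qed.

Lemma singular_value_le_sigma s : singular_value M gM s -> s <= sigma M.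
Proof.
  intros [Hs0 [v [[i0 [Hi0 Hvi0]] Hv]]].
  destruct (Rle_lt_dec s (sigma M)) as [|Hgt]; [auto|exfalso].
  pose proof (sigma_pos M hM). pose proof (INR_M_ge2 M hM). pose proof (M_theta M hM).
  set (lam := s * s) in *.
  assert (Hlam : sigma M * sigma M < lam) by (unfold lam; nra).
  destruct (large_eigenvalue_frequency lam Hlam) as [a [Ha Hca]].
  assert (Hsa : 0 < sin a) by (pose proof (theta_le M hM); apply sin_gt_0; lra).
  assert (Hlp : 0 < lam) by nra.
  pose proof (gtg_eigvec_interior M lam a v hM Hlp Hca Hv) as Hrec.
  destruct (gtg_eigvec_recurrence M lam v hM Hv) as [_ [Hb0 Hb1]].
  pose proof (three_term_solution M a v Hsa Hrec) as Hsol.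
  set (B := (v 1%nat - v 0%nat * cos a) / sin a) in Hsol.
  set (F := fun x => v 0%nat * cos (x * a) + B * sin (x * a)).
  assert (HF : forall j, (j < M)%nat -> v j = F (INR j)) by (intros; apply Hsol; auto).
  assert (FR : forall x, F (x + 1) = 2 * cos a * F x - F (x - 1))
    by (intros; apply sinusoid_three_term).
  assert (F0 : F 0 = v 0%nat) by (unfold F; rewrite Rmult_0_l, cos_0, sin_0; ring).
  assert (F1 : F 1 = v 1%nat) by (rewrite (HF 1%nat) by lia; reflexivity).
  assert (HM1 : INR (M - 1) = INR M - 1) by (rewrite minus_INR by lia; simpl; ring).
  assert (HM2 : INR (M - 2) = INR M - 2) by (rewrite minus_INR by lia; simpl; ring).
  (* The boundary equations say [F (-1) = - F (M - 1)] and [F M = - F 0]. *)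
  assert (Fm1 : F (-1) = 2 * cos a * v 0%nat - v 1%nat).
  { pose proof (FR 0) as E. replace (0 + 1) with 1 in E by ring.
    replace (0 - 1) with (-1) in E by ring. rewrite F0, F1 in E. lra. }
  assert (E1 : F (INR M - 1) + F (-1) = 0).
  { rewrite <- HM1, <- HF, Fm1, Hca by lia.
    apply (Rmult_eq_reg_l lam); [|lra]. field_simplify_eq; [|lra]. nra. }
  assert (E2 : F (INR M) + F 0 = 0).
  { pose proof (FR (INR M - 1)) as E. replace (INR M - 1 + 1) with (INR M) in E by ring.
    replace (INR M - 1 - 1) with (INR M - 2) in E by ring.
    rewrite <- HM1, <- HM2, <- (HF (M - 1)%nat), <- (HF (M - 2)%nat) in E by lia.
    rewrite E, F0, Hca. apply (Rmult_eq_reg_l lam); [|lra]. field_simplify_eq; [|lra]. nra. }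
  assert (HLa : 0 < INR M * a < PI).
  { split; [nra|]. rewrite <- (M_theta M hM). apply Rmult_lt_compat_l; lra. }
  rewrite F0 in E2.
  destruct (antiperiodic_sinusoid_zero (INR M) a (v 0%nat) B Hsa HLa E1 E2) as [HA HB].
  apply Hvi0. rewrite (HF i0 Hi0). unfold F. rewrite HA, HB. ring.
Qed.

(** The [sigma^2]-eigenspace is spanned by the two sinusoids [cos (k theta)]
    and [sin (k theta)]: they are independent, and every eigenvector solves the
    recurrence with [a = theta], hence is a combination of them. *)
Lemma sigma_multiplicity : singular_multiplicity M gM (sigma M) 2.
Proof.
  pose proof (sin_theta_pos M hM) as Hsth.
  exists (fun j i => match j with 0%nat => cos (INR i * theta M) | _ => sin (INR i * theta M) end).
  split; [|split].
  - intros j Hj. destruct j as [|[|j]]; [| |lia].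
    + apply (gtg_eigvec_ext M _ (fun i => mode M 1 0 (INR i))); [intros; unfold mode; ring|].
      apply mode_singular_vector; auto.
    + apply (gtg_eigvec_ext M _ (fun i => mode M 0 1 (INR i))); [intros; unfold mode; ring|].
      apply mode_singular_vector; auto.
  - intros c Hc.
    pose proof (Hc 0%nat ltac:(lia)) as H0. pose proof (Hc 1%nat ltac:(lia)) as H1.
    simpl in H0, H1. rewrite Rmult_0_l, cos_0, sin_0 in H0. rewrite Rmult_1_l in H1.
    assert (c0 : c 0%nat = 0) by lra.
    rewrite c0 in H1. assert (c1 : c 1%nat * sin (theta M) = 0) by lra.
    assert (c1' : c 1%nat = 0) by (destruct (Rmult_integral _ _ c1); lra).
    intros j Hj. destruct j as [|[|j]]; [auto|auto|lia].
  - intros v Hv.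
    pose proof (half_sin_pos M hM). pose proof (sigma_pos M hM).
    assert (Hcos : cos (theta M) = 1 - 2 / (sigma M * sigma M)).
    { rewrite (cos_theta M), (sigma_eq M hM). field. lra. }
    assert (Hlam : 0 < sigma M * sigma M) by nra.
    pose proof (gtg_eigvec_interior M _ _ v hM Hlam Hcos Hv) as Hrec.
    pose proof (three_term_solution M (theta M) v Hsth Hrec) as Hsol.
    exists (fun j => match j with
                     | 0%nat => v 0%nat
                     | _ => (v 1%nat - v 0%nat * cos (theta M)) / sin (theta M) end).
    intros i Hi. rewrite (Hsol i Hi). simpl. ring.
Qed.
End Spectrum.

Section OperatorNorm.
Variable M : nat.
Hypothesis hM : (2 <= M)%nat.

Definition gtg_matrix : CMat := fun i j => RtoC (gtg M gM i j).

Lemma gtg_matrix_hermitian : hermitian M gtg_matrix.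
Proof.
  intros i j Hi Hj. unfold gtg_matrix. rewrite Cconj_RtoC. f_equal. unfold gtg.
  apply rsum_ext; intros; ring.
Qed.

(** Real and imaginary parts of a complex eigenvector are real eigenvectors,
    so every eigenvalue of [g^T g] is at most [sigma^2]. *)
Lemma gtg_matrix_eigenvalue_le l : eigenvalue M gtg_matrix (RtoC l) -> l <= sigma M * sigma M.
Proof.
  intros [v [[i [Hi Hvi]] Hv]].
  pose proof (sigma_pos M hM).
  destruct (Rle_lt_dec l 0) as [|Hl]; [nra|].
  assert (HRe : gtg_eigvec M gM l (fun j => Re (v j))).
  { intros i' Hi'. pose proof (f_equal Re (Hv i' Hi')) as E.
    unfold mapply, gtg_matrix in E. rewrite Re_csum in E. simpl in E.
    rewrite Rmult_0_l, Rminus_0_r in E. rewrite <- E. apply rsum_ext; intros; ring. }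
  assert (HIm : gtg_eigvec M gM l (fun j => Im (v j))).
  { intros i' Hi'. pose proof (f_equal Im (Hv i' Hi')) as E.
    unfold mapply, gtg_matrix in E. rewrite Im_csum in E. simpl in E.
    rewrite Rmult_0_l, Rplus_0_r in E. rewrite <- E. apply rsum_ext; intros; ring. }
  assert (Hsv : singular_value M gM (sqrt l)).
  { split; [apply sqrt_pos|]. rewrite sqrt_sqrt by lra.
    destruct (Req_dec (Re (v i)) 0) as [Er|Er].
    - exists (fun j => Im (v j)). split; [|auto]. exists i. split; auto.
      intros Ei. apply Hvi. apply C_ext; simpl; auto.
    - exists (fun j => Re (v j)). split; [|auto]. exists i. split; auto. }
  pose proof (singular_value_le_sigma M hM _ Hsv).
  pose proof (sqrt_pos l). rewrite <- (sqrt_sqrt l) by lra. nra.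
Qed.

Lemma gapply_norm2 b :
  rsum M (fun x => gapply M b x * gapply M b x) = rsum M (fun y => b y * gtapply M (gapply M b) y).
Proof.
  unfold gtapply at 1. unfold gapply at 2.
  transitivity (rsum M (fun x => rsum M (fun y => gapply M b x * (gM x y * b y)))).
  { apply rsum_ext; intros. rewrite rsum_scal. reflexivity. }
  rewrite rsum_exch. apply rsum_ext; intros. rewrite <- rsum_scal.
  apply rsum_ext; intros. ring.
Qed.

(** [|g b|^2 <= sigma^2 |b|^2], by diagonalizing [g^T g]. *)
Lemma gapply_norm_bound b :
  rsum M (fun x => gapply M b x * gapply M b x) <= sigma M * sigma M * rsum M (fun y => b y * b y).
Proof.
  destruct (hermitian_spectral_forms M gtg_matrix gtg_matrix_hermitian)
    as [c [d [Hnorm [_ [Hquad Hev]]]]].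
  set (bC := fun i => RtoC (b i)).
  assert (E1 : Re (inner M bC (mapply M gtg_matrix bC)) =
               rsum M (fun x => gapply M b x * gapply M b x)).
  { rewrite gapply_norm2, Re_inner. apply rsum_ext; intros y Hy.
    unfold bC, mapply, gtg_matrix. rewrite Re_csum, Im_csum. simpl. rewrite <- gtg_apply.
    replace (rsum M (fun i => gtg M gM y i * b i - 0 * 0))
      with (rsum M (fun k => gtg M gM y k * b k)) by (apply rsum_ext; intros; ring).
    ring. }
  assert (E2 : norm2 M bC = rsum M (fun y => b y * b y)).
  { unfold norm2, bC, Cnorm2. apply rsum_ext; intros; simpl; ring. }
  rewrite <- E1, <- E2, Hquad, Hnorm, <- rsum_scal. apply rsum_le. intros k Hk.
  pose proof (gtg_matrix_eigenvalue_le (d k) (Hev k Hk)). pose proof (Cnorm2_nonneg (c bC k)).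
  nra.
Qed.

(** The bilinear form of [g] is bounded by [sigma/2 (|a|^2 + |b|^2)]
    (operator norm bound combined with [2 x y <= x^2 + y^2]). *)
Lemma bilinear_bound (a b : nat -> R) :
  rsum M (fun x => rsum M (fun y => gM x y * (a x * b y))) <=
  sigma M / 2 * (rsum M (fun x => a x * a x) + rsum M (fun y => b y * b y)).
Proof.
  pose proof (sigma_pos M hM).
  assert (Hinv : 0 < / (2 * sigma M)) by (apply Rinv_0_lt_compat; lra).
  transitivity (rsum M (fun x => sigma M / 2 * (a x * a x) +
                                 / (2 * sigma M) * (gapply M b x * gapply M b x))).
  - apply rsum_le. intros x Hx.
    replace (rsum M (fun y => gM x y * (a x * b y))) with (a x * gapply M b x)
      by (unfold gapply; rewrite <- rsum_scal; apply rsum_ext; intros; ring).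
    pose proof (Rle_0_sqr (sigma M * a x - gapply M b x)). unfold Rsqr in *.
    apply (Rmult_le_reg_l (2 * sigma M)); [lra|].
    field_simplify; [|lra]. nra.
  - rewrite rsum_add, !rsum_scal.
    pose proof (Rmult_le_compat_l _ _ _ (Rlt_le _ _ Hinv) (gapply_norm_bound b)) as Hscaled.
    replace (/ (2 * sigma M) * (sigma M * sigma M * rsum M (fun y => b y * b y)))
      with (sigma M / 2 * rsum M (fun y => b y * b y)) in Hscaled by (field; lra).
    lra.
Qed.

Lemma complex_bilinear_bound (X Y : nat -> C) :
  rsum M (fun x => rsum M (fun y => gM x y * (Re (X x) * Re (Y y) + Im (X x) * Im (Y y)))) <=
  sigma M / 2 * (rsum M (fun x => Cnorm2 (X x)) + rsum M (fun y => Cnorm2 (Y y))).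
Proof.
  pose proof (bilinear_bound (fun x => Re (X x)) (fun y => Re (Y y))) as HRe.
  pose proof (bilinear_bound (fun x => Im (X x)) (fun y => Im (Y y))) as HIm.
  replace (rsum M (fun x => rsum M (fun y =>
             gM x y * (Re (X x) * Re (Y y) + Im (X x) * Im (Y y)))))
    with (rsum M (fun x => rsum M (fun y => gM x y * (Re (X x) * Re (Y y)))) +
          rsum M (fun x => rsum M (fun y => gM x y * (Im (X x) * Im (Y y))))).
  - unfold Cnorm2. rewrite !rsum_add. lra.
  - rewrite <- rsum_add. apply rsum_ext; intros. rewrite <- rsum_add.
    apply rsum_ext; intros. ring.
Qed.
End OperatorNorm.

(** ** The quantum bound *)

Lemma divmod_pair d2 a b : (b < d2)%nat -> ((a * d2 + b) / d2 = a /\ (a * d2 + b) mod d2 = b)%nat.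
Proof.
  intros Hb. split.
  - rewrite Nat.div_add_l, Nat.div_small by lia. lia.
  - rewrite Nat.add_comm, Nat.Div0.mod_add. apply Nat.mod_small; auto.
Qed.

Definition left_slice (d2 : nat) (psi : CVec) (b : nat) : CVec := fun a => psi (a * d2 + b)%nat.
Definition right_slice (d2 : nat) (psi : CVec) (a : nat) : CVec := fun b => psi (a * d2 + b)%nat.

Lemma inner_kron d1 d2 A B psi :
  inner (d1 * d2) psi (mapply (d1 * d2) (kron d2 A B) psi) =
  csum d2 (fun b => inner d1 (left_slice d2 psi b)
                      (mapply d1 A (fun a => mapply d2 B (right_slice d2 psi a) b))).
Proof.
  unfold inner at 1. rewrite csum_split, csum_exch. apply csum_ext; intros b Hb.
  unfold inner. apply csum_ext; intros a Ha. unfold left_slice. f_equal.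
  unfold mapply at 1. rewrite csum_split. unfold mapply. apply csum_ext; intros a' Ha'.
  rewrite <- csum_scal. apply csum_ext; intros b' Hb'.
  unfold kron, right_slice. destruct (divmod_pair d2 a b Hb) as [E1 E2].
  destruct (divmod_pair d2 a' b' Hb') as [E3 E4]. rewrite E1, E2, E3, E4. ring.
Qed.

Section PureState.
Variable M : nat.
Hypothesis hM : (2 <= M)%nat.
Variables d1 d2 : nat.
Variables A1 A2 : nat -> CMat.
Hypothesis hA1 : forall x, (x < M)%nat -> observable d1 (A1 x).
Hypothesis hA2 : forall y, (y < M)%nat -> observable d2 (A2 y).
Variable psi : CVec.

(** Slices of [(A1 x (x) 1) psi] and of [(1 (x) A2 y) psi]. *)
Definition left_vector (x b : nat) : CVec := mapply d1 (A1 x) (left_slice d2 psi b).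
Definition right_vector (y b : nat) : CVec :=
  fun a => mapply d2 (A2 y) (right_slice d2 psi a) b.

Lemma correlation_as_inner x y : (x < M)%nat ->
  Re (inner (d1 * d2) psi (mapply (d1 * d2) (kron d2 (A1 x) (A2 y)) psi)) =
  rsum d2 (fun b => rsum d1 (fun a =>
    Re (left_vector x b a) * Re (right_vector y b a) +
    Im (left_vector x b a) * Im (right_vector y b a))).
Proof.
  intros Hx. rewrite inner_kron, Re_csum. apply rsum_ext; intros b Hb.
  rewrite inner_hermitian by (destruct (hA1 x Hx); auto). rewrite Re_inner. reflexivity.
Qed.

Lemma left_vector_norm x : (x < M)%nat ->
  rsum d2 (fun b => rsum d1 (fun a => Cnorm2 (left_vector x b a))) <= norm2 (d1 * d2) psi.
Proof.
  intros Hx. unfold norm2. rewrite rsum_split, (rsum_exch d1 d2).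
  apply rsum_le; intros b Hb. apply (observable_contraction d1 (A1 x)); auto.
Qed.

Lemma right_vector_norm y : (y < M)%nat ->
  rsum d2 (fun b => rsum d1 (fun a => Cnorm2 (right_vector y b a))) <= norm2 (d1 * d2) psi.
Proof.
  intros Hy. unfold norm2. rewrite rsum_split, (rsum_exch d2 d1).
  apply rsum_le; intros a Ha. apply (observable_contraction d2 (A2 y)); auto.
Qed.

Lemma pure_state_bound :
  rsum M (fun x => rsum M (fun y => gM x y *
     Re (inner (d1 * d2) psi (mapply (d1 * d2) (kron d2 (A1 x) (A2 y)) psi))))
  <= INR M * sigma M * norm2 (d1 * d2) psi.
Proof.
  pose proof (sigma_pos M hM).
  set (X b a x := left_vector x b a). set (Y b a y := right_vector y b a).
  transitivity (rsum d2 (fun b => rsum d1 (fun a => rsum M (fun x => rsum M (fun y =>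
     gM x y * (Re (X b a x) * Re (Y b a y) + Im (X b a x) * Im (Y b a y))))))).
  { right.
    transitivity (rsum M (fun x => rsum M (fun y => rsum d2 (fun b => rsum d1 (fun a =>
       gM x y * (Re (X b a x) * Re (Y b a y) + Im (X b a x) * Im (Y b a y))))))).
    { apply rsum_ext; intros x Hx; apply rsum_ext; intros y Hy.
      rewrite correlation_as_inner by auto.
      rewrite <- rsum_scal. apply rsum_ext; intros b Hb. rewrite <- rsum_scal. reflexivity. }
    rewrite rsum_exch3. apply rsum_ext; intros b Hb. apply rsum_exch3. }
  transitivity (rsum d2 (fun b => rsum d1 (fun a => sigma M / 2 *
     (rsum M (fun x => Cnorm2 (X b a x)) + rsum M (fun y => Cnorm2 (Y b a y)))))).
  { apply rsum_le; intros b Hb; apply rsum_le; intros a Ha.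
    apply (complex_bilinear_bound M hM). }
  transitivity (sigma M / 2 *
     (rsum M (fun x => rsum d2 (fun b => rsum d1 (fun a => Cnorm2 (X b a x)))) +
      rsum M (fun y => rsum d2 (fun b => rsum d1 (fun a => Cnorm2 (Y b a y)))))).
  { right. rewrite <- (rsum_exch3 d2 d1 M (fun b a x => Cnorm2 (X b a x))).
    rewrite <- (rsum_exch3 d2 d1 M (fun b a y => Cnorm2 (Y b a y))).
    rewrite <- rsum_add, <- rsum_scal. apply rsum_ext; intros.
    rewrite <- rsum_add, <- rsum_scal. reflexivity. }
  transitivity (sigma M / 2 *
     (rsum M (fun _ => norm2 (d1 * d2) psi) + rsum M (fun _ => norm2 (d1 * d2) psi))).
  { apply Rmult_le_compat_l; [lra|]. apply Rplus_le_compat; apply rsum_le; intros.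
    - apply left_vector_norm; auto.
    - apply right_vector_norm; auto. }
  rewrite rsum_const. right. field.
Qed.
End PureState.

(** Averaging the pure-state bound over the spectral decomposition of [rho]. *)
Lemma quantum_value_bound M (hM : (2 <= M)%nat) r : achievable M gM r -> r <= INR M * sigma M.
Proof.
  intros [d1 [d2 [rho [A1 [A2 [_ [_ [Hrho [hA1 [hA2 Hval]]]]]]]]]].
  destruct (density_mixture _ rho Hrho) as [e [p [Hp [Hsum [Hnorm Htrace]]]]].
  set (V k x y := Re (inner (d1 * d2) (e k) (mapply (d1 * d2) (kron d2 (A1 x) (A2 y)) (e k)))).
  apply (f_equal Re) in Hval. simpl in Hval. rewrite <- Hval, Re_csum.
  transitivity (rsum (d1 * d2) (fun k => p k * rsum M (fun x => rsum M (fun y =>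
                  gM x y * V k x y)))).
  { right.
    transitivity (rsum M (fun x => rsum M (fun y =>
                    rsum (d1 * d2) (fun k => p k * (gM x y * V k x y))))).
    { apply rsum_ext; intros x Hx. rewrite Re_csum. apply rsum_ext; intros y Hy.
      rewrite Htrace, Re_RtoC_mul, Re_csum, <- rsum_scal.
      apply rsum_ext; intros k Hk. rewrite Re_RtoC_mul. unfold V. ring. }
    rewrite rsum_exch3. apply rsum_ext; intros k Hk.
    rewrite <- rsum_scal. apply rsum_ext; intros. rewrite <- rsum_scal. reflexivity. }
  transitivity (rsum (d1 * d2) (fun k => p k * (INR M * sigma M))).
  { apply rsum_le; intros k Hk. apply Rmult_le_compat_l; [auto|].
    rewrite <- (Rmult_1_r (INR M * sigma M)), <- (Hnorm k Hk).
    apply (pure_state_bound M hM d1 d2 A1 A2 hA1 hA2 (e k)). }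
  right. rewrite (rsum_ext _ _ (fun k => (INR M * sigma M) * p k)) by (intros; ring).
  rewrite rsum_scal, Hsum. ring.
Qed.

(** ** An optimal strategy *)

Lemma mapply_ext d A v w : (forall i, (i < d)%nat -> v i = w i) ->
  forall i, mapply d A v i = mapply d A w i.
Proof. intros H i. unfold mapply. apply csum_ext; intros. rewrite H; auto. Qed.

Lemma mapply_scal d A c v i :
  mapply d A (fun j => Cmul c (v j)) i = Cmul c (mapply d A v i).
Proof. unfold mapply. rewrite <- csum_scal. apply csum_ext; intros. ring. Qed.

Lemma involution_eigenvalue d A lam :
  (forall v i, (i < d)%nat -> mapply d A (mapply d A v) i = v i) ->
  eigenvalue d A lam -> Im lam = 0 /\ -1 <= Re lam <= 1.
Proof.
  intros Hinv [v [[i [Hi Hvi]] Hv]].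
  assert (E : v i = Cmul lam (Cmul lam (v i))).
  { transitivity (mapply d A (mapply d A v) i); [symmetry; apply Hinv; auto|].
    rewrite (mapply_ext d A _ (fun j => Cmul lam (v j)) Hv), mapply_scal, Hv by auto.
    reflexivity. }
  assert (Hnz : 0 < Cnorm2 (v i)).
  { destruct (Rle_lt_or_eq_dec _ _ (Cnorm2_nonneg (v i))) as [|Hz]; auto.
    exfalso. apply Hvi. unfold Cnorm2 in Hz. apply C_ext; simpl; nra. }
  pose proof (f_equal Re E) as ER. pose proof (f_equal Im E) as EI. simpl in ER, EI.
  unfold Cnorm2 in Hnz.
  set (a := Re (v i)) in *. set (b := Im (v i)) in *.
  set (x := Re lam) in *. set (y := Im lam) in *.
  (* [(1 - lam^2) v i = 0] with [v i <> 0] forces [lam^2 = 1]. *)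
  assert (Ra : a - ((x * x - y * y) * a - 2 * x * y * b) = 0) by lra.
  assert (Rb : b - ((x * x - y * y) * b + 2 * x * y * a) = 0) by lra.
  assert (Hre : (1 - (x * x - y * y)) * (a * a + b * b) = 0).
  { replace ((1 - (x * x - y * y)) * (a * a + b * b)) with
      (a * (a - ((x * x - y * y) * a - 2 * x * y * b)) +
       b * (b - ((x * x - y * y) * b + 2 * x * y * a))) by ring.
    rewrite Ra, Rb. ring. }
  assert (Him : (2 * x * y) * (a * a + b * b) = 0).
  { replace ((2 * x * y) * (a * a + b * b)) with
      (b * (a - ((x * x - y * y) * a - 2 * x * y * b)) -
       a * (b - ((x * x - y * y) * b + 2 * x * y * a))) by ring.
    rewrite Ra, Rb. ring. }
  apply Rmult_integral in Hre. apply Rmult_integral in Him.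
  destruct Hre as [Hre|]; [|lra]. destruct Him as [Him|]; [|lra].
  assert (Hy : y = 0) by nra. split; [exact Hy|]. rewrite Hy in Hre. nra.
Qed.

Definition reflection (p q : R) : CMat := fun i j =>
  match i, j with
  | 0, 0 => RtoC p | 0, 1 => RtoC q | 1, 0 => RtoC q | 1, 1 => RtoC (- p)
  | _, _ => C0 end%nat.

Lemma reflection_observable p q : p * p + q * q = 1 -> observable 2 (reflection p q).
Proof.
  intros Hpq. split.
  - intros i j Hi Hj. destruct i as [|[|i]]; destruct j as [|[|j]]; try lia;
      apply C_ext; simpl; ring.
  - intros lam. apply involution_eigenvalue.
    intros v i Hi. destruct i as [|[|i]]; try lia;
      apply C_ext; unfold mapply, reflection; simpl;
      match goal with |- _ = ?r =>
        transitivity ((p * p + q * q) * r); [ring | rewrite Hpq; ring] end.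
Qed.

(** The maximally entangled state [(|00> + |11>) / sqrt 2]. *)
Definition max_entangled : CMat := fun i j =>
  if andb (orb (Nat.eqb i 0) (Nat.eqb i 3)) (orb (Nat.eqb j 0) (Nat.eqb j 3))
  then RtoC (/2) else C0.

Lemma max_entangled_density : density (2 * 2) max_entangled.
Proof.
  split; [split|].
  - intros i j Hi Hj. simpl in Hi, Hj.
    destruct i as [|[|[|[|i]]]]; destruct j as [|[|[|[|j]]]]; try lia;
      apply C_ext; unfold max_entangled; simpl; ring.
  - intros v. unfold inner, mapply, max_entangled. simpl.
    set (x0 := Re (v 0%nat)). set (y0 := Im (v 0%nat)).
    set (x3 := Re (v 3%nat)). set (y3 := Im (v 3%nat)).
    split; [ring|].
    match goal with |- 0 <= ?e =>
      replace e with (((x0 + x3) * (x0 + x3) + (y0 + y3) * (y0 + y3)) / 2) by field end.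
    pose proof (Rle_0_sqr (x0 + x3)). pose proof (Rle_0_sqr (y0 + y3)).
    unfold Rsqr in *. lra.
  - apply C_ext; unfold trace, max_entangled; simpl; field.
Qed.

Lemma max_entangled_correlation p q p' q' :
  trace (2 * 2) (mmul (2 * 2) max_entangled (kron 2 (reflection p q) (reflection p' q'))) =
  RtoC (p * p' + q * q').
Proof. apply C_ext; unfold trace, mmul, kron, max_entangled, reflection; simpl; field. Qed.

(** Alice measures along the left singular vectors (angles [(x + 1/2) theta]),
    Bob along the right ones (angles [y theta]); the value is [M sigma]. *)
Lemma optimal_strategy M (hM : (2 <= M)%nat) : achievable M gM (INR M * sigma M).
Proof.
  set (xi x := (INR x + /2) * theta M).
  exists 2%nat, 2%nat, max_entangled,
    (fun x => reflection (sin (xi x)) (- cos (xi x))),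
    (fun y => reflection (cos (INR y * theta M)) (sin (INR y * theta M))).
  split; [lia|]. split; [lia|]. split; [apply max_entangled_density|].
  split; [intros x _; apply reflection_observable;
          pose proof (sin2_cos2 (xi x)) as E; unfold Rsqr in E; lra|].
  split; [intros y _; apply reflection_observable;
          pose proof (sin2_cos2 (INR y * theta M)) as E; unfold Rsqr in E; lra|].
  transitivity (RtoC (rsum M (fun x => rsum M (fun y => gM x y *
     (sin (xi x) * mode M 1 0 (INR y) - cos (xi x) * mode M 0 1 (INR y)))))).
  { rewrite <- csum_RtoC. apply csum_ext; intros x Hx.
    rewrite <- csum_RtoC. apply csum_ext; intros y Hy.
    rewrite max_entangled_correlation, RtoC_mul. f_equal. unfold mode. ring. }
  f_equal. pose proof (half_sin_pos M hM).
  rewrite (sigma_eq M hM), <- rsum_const. apply rsum_ext. intros x Hx.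
  transitivity (sin (xi x) * gapply M (fun j => mode M 1 0 (INR j)) x -
                cos (xi x) * gapply M (fun j => mode M 0 1 (INR j)) x).
  { unfold gapply. rewrite <- !rsum_scal, <- rsum_opp_sub. apply rsum_ext; intros; ring. }
  rewrite !(gapply_mode M hM) by auto. unfold dual_mode. fold (xi x).
  pose proof (sin2_cos2 (xi x)) as E. unfold Rsqr in E.
  transitivity ((sin (xi x) * sin (xi x) + cos (xi x) * cos (xi x)) / half_sin M).
  - field. lra.
  - rewrite E. field. lra.
Qed.

Theorem mainTheorem12 (M : nat) (hM : (2 <= M)%nat) :
  largest_singular_value M gM (csc (PI / (2 * INR M))) /\
  singular_multiplicity M gM (csc (PI / (2 * INR M))) 2 /\
  quantum_value M gM (INR M * csc (PI / (2 * INR M))) /\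
  achievable M gM (INR M * csc (PI / (2 * INR M))).
Proof.
  change (csc (PI / (2 * INR M))) with (sigma M).
  split; [split; [apply sigma_singular_value | apply singular_value_le_sigma]; auto|].
  split; [apply sigma_multiplicity; auto|].
  split; [|apply optimal_strategy; auto].
  split.
  - intros r Hr. apply quantum_value_bound; auto.
  - intros b Hb. apply Hb, optimal_strategy; auto.
Qed.
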